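(* For every positive integer $k$, \[ \sum_{i+t\le\lfloor k/2\rfloor}B_{2t}\,2^{2t}\binom{2k+2}{2t,\;2i+1,\;2k-2t-2i+1}=(k+1)\left(2^{2k}+(-1)^k\binom{2k}{k}\right), \] where the sum ranges over all pairs of nonnegative integers $i,t$ with $i+t\le\lfloor k/2\rfloor$.
   Context: The Bernoulli numbers $B_m$ ($m\ge 0$) are defined by $\dfrac{x}{e^x-1}=\sum_{m=0}^\infty B_m\dfrac{x^m}{m!}$. The trinomial coefficient is $\binom{n}{r_1,r_2,r_3}=\dfrac{n!}{r_1!\,r_2!\,r_3!}$ for nonnegative integers $r_1+r_2+r_3=n$. *)

From HB Require Import structures.
From mathcomp Require Import all_boot all_order all_algebra.
Set Implicit Arguments. Unset Strict Implicit. Unset Printing Implicit Defensive.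
Import Order.TTheory GRing.Theory Num.Theory.
Local Open Scope ring_scope.

(* Bernoulli numbers via the generating function x/(e^x-1) = sum B_m x^m/m!.
   Since (e^x-1)/x = sum_n x^n/(n+1)!, the identity
     (sum_m B_m x^m/m!) * (sum_n x^n/(n+1)!) = 1
   holds coefficientwise, i.e. B_0 = 1 and for m >= 1
     sum_{j=0}^{m} B_j / (j! (m-j+1)!) = 0,
   which determines B_m recursively:
     B_m = - m! * sum_{j<m} B_j / (j! (m-j+1)!).
   bern_list m = [:: B_0; ...; B_m]. *)
Fixpoint bern_list (m : nat) : seq rat :=
  match m with
  | 0 => [:: 1]
  | m'.+1 =>
      let s := bern_list m' in
      rcons s (- (m'.+1)`!%:R *
               \sum_(j < m'.+1) s`_j / ((j`!)%:R * ((m'.+1 - j).+1)`!%:R))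
  end.

Definition bernoulli (m : nat) : rat := (bern_list m)`_m.

Definition trinomial (n r1 r2 r3 : nat) : rat :=
  (n`!)%:R / ((r1`!)%:R * (r2`!)%:R * (r3`!)%:R).

From HB Require Import structures.
From mathcomp Require Import all_boot all_order all_algebra.
From mathcomp Require Import ring zify.

Set Implicit Arguments.
Unset Strict Implicit.
Unset Printing Implicit Defensive.

Import Order.TTheory GRing.Theory Num.Theory.
Local Open Scope ring_scope.

(* With B(x) = x / (e^x - 1), the identity B(2x) (e^x - e^-x) = 2x e^-x holds;
   since e^x - e^-x is odd, its coefficient of x^(2j+1) only involves the
   even Bernoulli numbers and reads
     sum_t B_(2t) 2^(2t) C(2j+1, 2t) = 2j + 1.
   Grouping the trinomial sum by j = t + i and factoring the trinomial as
   C(2k+2, 2j+1) C(2j+1, 2t) turns the left-hand side into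
   (2k+2) sum_(j <= k/2) C(2k+1, 2j) = (2k+2) sum_(l <= 2(k/2)) C(2k, l),
   and by the symmetry of row 2k of Pascal's triangle this half-row sum is
   (4^k + (-1)^k C(2k, k)) / 2.  Power series are handled as polynomials
   modulo X^n. *)

Section Factorials.
Variable R : numFieldType.

Lemma natr_fact_neq0 n : n`!%:R != 0 :> R.
Proof. by rewrite pnatr_eq0 -lt0n fact_gt0. Qed.

Lemma natr_bin_fact n m : (m <= n)%N ->
  'C(n, m)%:R = n`!%:R / (m`!%:R * (n - m)`!%:R) :> R.
Proof.
move=> le_mn; rewrite -(bin_fact le_mn) !natrM mulfK //.
by rewrite mulf_neq0 ?natr_fact_neq0.
Qed.

Lemma exprDn_fact (a b : R) n : (a + b) ^+ n / n`!%:R =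
  \sum_(i < n.+1) a ^+ i / i`!%:R * (b ^+ (n - i) / (n - i)`!%:R).
Proof.
rewrite addrC exprDn mulr_suml; apply: eq_bigr => i _.
rewrite -mulr_natr natr_bin_fact; last by rewrite -ltnS.
rewrite [_`!%:R / _]mulrC [_ * (_^-1 * _)]mulrA mulfK ?natr_fact_neq0 //.
by rewrite invfM [_ * a ^+ i]mulrC mulrACA mulrA.
Qed.

End Factorials.

Section TruncatedProducts.
Variable F : fieldType.
Implicit Types (d p q : {poly F}) (f g : nat -> F).

Lemma modp_congM d p1 p2 q1 q2 : p1 %% d = q1 %% d -> p2 %% d = q2 %% d ->
  (p1 * p2) %% d = (q1 * q2) %% d.
Proof.
move=> eq1 eq2; rewrite -modp_mul eq2 modp_mul mulrC -(modp_mul q2) eq1.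
by rewrite modp_mul mulrC.
Qed.

Lemma coef_modXn n p i : (p %% 'X^n)`_i = if (i < n)%N then p`_i else 0.
Proof. by rewrite -Pdiv.IdomainMonic.take_poly_modp coef_take_poly. Qed.

Lemma eq_modXn n p q : (forall i, (i < n)%N -> p`_i = q`_i) ->
  p %% 'X^n = q %% 'X^n.
Proof. by move=> eq_pq; apply/polyP => i; rewrite !coef_modXn; case: ifP => // /eq_pq. Qed.

Lemma coef_poly_mul n f g i : (i < n)%N ->
  (\poly_(j < n) f j * \poly_(j < n) g j)`_i = \sum_(j < i.+1) f j * g (i - j)%N.
Proof.
move=> lt_in; rewrite coefM; apply: eq_bigr => j _.
have le_ji : (j <= i)%N by rewrite -ltnS.
by rewrite !coef_poly (leq_ltn_trans le_ji lt_in) (leq_ltn_trans (leq_subr j i) lt_in).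
Qed.

End TruncatedProducts.

Definition exp_poly (R : numFieldType) (n : nat) (c : R) : {poly R} :=
  \poly_(i < n) (c ^+ i / i`!%:R).

Lemma exp_polyM (R : numFieldType) n (a b : R) :
  (exp_poly n a * exp_poly n b) %% 'X^n = exp_poly n (a + b) %% 'X^n.
Proof.
by apply: eq_modXn => i lt_in; rewrite coef_poly_mul // coef_poly lt_in exprDn_fact.
Qed.

Lemma size_bern_list m : size (bern_list m) = m.+1.
Proof. by elim: m => //= m IHm; rewrite size_rcons IHm. Qed.

Lemma nth_bern_list m j : (j <= m)%N -> (bern_list m)`_j = bernoulli j.
Proof.
elim: m => [|m IHm]; first by rewrite leqn0 => /eqP ->.
rewrite leq_eqVlt => /orP[/eqP -> // | lt_jm].
by rewrite /= nth_rcons size_bern_list lt_jm IHm.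
Qed.

Lemma bernoulliS m : bernoulli m.+1 =
  - m.+1`!%:R * \sum_(j < m.+1) bernoulli j / (j`!%:R * (m.+1 - j).+1`!%:R).
Proof.
rewrite /bernoulli /= nth_rcons size_bern_list ltnn eqxx; congr (_ * _).
by apply: eq_bigr => j _; rewrite nth_bern_list // -ltnS.
Qed.

Lemma bernoulli_conv n :
  \sum_(j < n) bernoulli j / (j`!%:R * (n - j)`!%:R) = (n == 1)%:R.
Proof.
case: n => [|[|m]]; first by rewrite big_ord0.
  by rewrite big_ord1 /bernoulli /= subn0 fact0 mulr1.
rewrite big_ord_recr /= subSnn bernoulliS.
rewrite (eq_bigr (fun j : 'I_m.+1 => bernoulli j / (j`!%:R * (m.+1 - j).+1`!%:R))).
  rewrite [1`!]/= mulr1 !mulNr mulrAC mulfV ?natr_fact_neq0 // mul1r.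
  exact: subrr.
by move=> j _; rewrite subSn // ltnW.
Qed.

Definition bern_poly n (c : rat) : {poly rat} :=
  \poly_(i < n) (bernoulli i * c ^+ i / i`!%:R).

Lemma bern_polyM_exp n c :
  (bern_poly n c * (exp_poly n c - 1)) %% 'X^n = (c *: 'X) %% 'X^n.
Proof.
apply: eq_modXn => i lt_in.
rewrite mulrBr mulr1 coefB coef_poly_mul // coef_poly lt_in coefZ coefX.
rewrite big_ord_recr /= subnn expr0 fact0 mulr1n divr1 addrK.
rewrite (eq_bigr (fun j : 'I_i => c ^+ i * (bernoulli j / (j`!%:R * (i - j)`!%:R)))).
  rewrite -mulr_sumr bernoulli_conv.
  by case: eqP => [->|_]; rewrite ?expr1 ?mulr0.
move=> j _; rewrite -[in c ^+ i](subnKC (ltnW (ltn_ord j))) exprD invfM.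
ring.
Qed.

Lemma bern_polyM_sinh n :
  (bern_poly n 2 * (exp_poly n 1 - exp_poly n (-1))) %% 'X^n
  = (2%:R *: ('X * exp_poly n (-1))) %% 'X^n.
Proof.
have exp_sub : (exp_poly n 1 - exp_poly n (-1)) %% 'X^n
    = ((exp_poly n 2 - 1) * exp_poly n (-1)) %% 'X^n :> {poly rat}.
  by rewrite mulrBl mul1r !modpD exp_polyM (_ : 2%:R + -1 = 1 :> rat).
rewrite (modp_congM (erefl (bern_poly n 2 %% 'X^n)) exp_sub) mulrA.
by rewrite (modp_congM (bern_polyM_exp n 2) (erefl _)) scalerAl.
Qed.

Lemma big_ord_double (R : Type) (idx : R) (op : Monoid.law idx) n (F : nat -> R) :
  \big[op/idx]_(i < 2 * n) F i = \big[op/idx]_(t < n) op (F (2 * t)%N) (F (2 * t).+1).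
Proof.
elim: n => [|n IHn]; first by rewrite !big_ord0.
by rewrite mulnS !big_ord_recr /= IHn Monoid.mulmA.
Qed.

Lemma sum_even_bernoulli j :
  \sum_(t < j.+1) bernoulli (2 * t) * 2%:R ^+ (2 * t) * 'C(2 * j + 1, 2 * t)%:R
  = (2 * j + 1)%:R.
Proof.
pose n := (2 * j.+1)%N.
have sinh_poly : exp_poly n 1 - exp_poly n (-1)
    = \poly_(i < n) ((1 - (-1) ^+ i) / i`!%:R) :> {poly rat}.
  apply/polyP => i; rewrite coefB !coef_poly.
  by case: ifP => _; rewrite ?subr0 // expr1n mulrBl.
have lt_jn : ((2 * j).+1 < n)%N by rewrite /n; lia.
have := congr1 (fun p : {poly rat} => p`_(2 * j).+1) (bern_polyM_sinh n).
rewrite !coef_modXn lt_jn sinh_poly coef_poly_mul // coefZ coefXM /=.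
rewrite coef_poly (ltnW lt_jn) exprM sqrrN !expr1n mul1r !addn1.
pose F i := bernoulli i * 2%:R ^+ i / i`!%:R
  * ((1 - (-1) ^+ ((2 * j).+1 - i)) / ((2 * j).+1 - i)`!%:R).
rewrite (_ : (2 * j).+2 = 2 * j.+1)%N; last by lia.
rewrite (big_ord_double _ _ F) => coef_eq.
rewrite (eq_bigr (fun t : 'I_j.+1 => (2 * j).+1`!%:R / 2%:R * (F (2 * t)%N + F (2 * t).+1))).
  by rewrite -mulr_sumr coef_eq factS natrM; field; rewrite natr_fact_neq0.
move=> t _; have le_tj : (t <= j)%N by rewrite -ltnS.
have le_2t2j : (2 * t <= 2 * j)%N by rewrite leq_mul2l.
rewrite /F natr_bin_fact ?(leqW le_2t2j) // subSS subSn // -mulnBr.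
(* The odd index contributes 1 - (-1)^(2(j-t)) = 0, the even one 1 + 1. *)
rewrite exprS [(-1) ^+ (2 * _)]exprM sqrrN !expr1n subrr mul0r mulr0 addr0.
by field; rewrite !natr_fact_neq0.
Qed.

Lemma trinomial_binomial n a b c : (a + b + c = n)%N ->
  trinomial n a b c = 'C(n, a + b)%:R * 'C(a + b, a)%:R.
Proof.
move=> <-; rewrite /trinomial !natr_bin_fact ?leq_addr // !addKn.
by field; rewrite !natr_fact_neq0.
Qed.

Lemma big_triangle (R : Type) (idx : R) (op : Monoid.com_law idx)
    (F : nat -> nat -> R) m :
  \big[op/idx]_(t < m.+1) \big[op/idx]_(i < (m - t).+1) F (t + i)%N t
  = \big[op/idx]_(j < m.+1) \big[op/idx]_(t < j.+1) F j t.
Proof.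
elim: m => [|m IHm]; first by rewrite !big_ord1.
rewrite big_ord_recr subnn big_ord1 addn0 /=.
rewrite [RHS]big_ord_recr /= -IHm [X in _ = op _ X]big_ord_recr /= Monoid.mulmA.
congr (op _ _).
rewrite (eq_bigr (fun t : 'I_m.+1 =>
  op (\big[op/idx]_(i < (m - t).+1) F (t + i)%N t) (F m.+1 t))) ?big_split //.
move=> t _; have le_tm : (t <= m)%N by rewrite -ltnS.
by rewrite subSn // big_ord_recr /= addnS subnKC.
Qed.

Lemma sum_binS_even n m :
  (\sum_(j < m.+1) 'C(n.+1, 2 * j) = \sum_(l < (2 * m).+1) 'C(n, l))%N.
Proof.
pose F l := if l is l'.+1 then 'C(n, l') else 0%N.
have -> : (\sum_(l < (2 * m).+1) 'C(n, l) = \sum_(l < 2 * m.+1) F l)%N.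
  rewrite (_ : 2 * m.+1 = (2 * m).+2)%N; last by lia.
  by rewrite [RHS]big_ord_recl.
rewrite big_ord_double; apply: eq_bigr => -[[|t] lt_t] _; first by rewrite muln0 /= !bin0.
by rewrite (_ : 2 * t.+1 = (2 * t).+2)%N ?binS 1?addnC //; lia.
Qed.

Lemma sum_bin_lt_half k :
  (2 * \sum_(l < k) 'C(2 * k, l) + 'C(2 * k, k) = 2 ^ (2 * k))%N.
Proof.
have -> : (2 ^ (2 * k) = \sum_(l < (2 * k).+1) 'C(2 * k, l))%N.
  rewrite -[in LHS](add1n 1) expnDn; apply: eq_bigr => l _.
  by rewrite !exp1n !muln1.
rewrite (_ : (2 * k).+1 = k + k.+1)%N; last by lia.
rewrite big_split_ord /= big_ord_recl addn0 mul2n -addnn -!addnA; congr (_ + _).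
rewrite addnC; congr (_ + _).
rewrite [LHS](reindex_inj rev_ord_inj); apply: eq_bigr => l _ /=.
have lt_lk := ltn_ord l.
rewrite -bin_sub /bump ?leq0n ?add1n; last by lia.
by congr 'C(_, _); lia.
Qed.

Lemma sum_bin_even_half (R : pzRingType) k :
  2%:R * \sum_(j < (k./2).+1) 'C((2 * k).+1, 2 * j)%:R
  = 2%:R ^+ (2 * k) + (-1) ^+ k * 'C(2 * k, k)%:R :> R.
Proof.
rewrite -natr_sum sum_binS_even -natrM -natrX -(sum_bin_lt_half k) natrD.
rewrite -signr_odd; have := odd_double_half k; rewrite -mul2n.
case: (odd k) => /= [|]; rewrite ?add1n ?add0n => ->.
  by rewrite mulN1r addrK.
by rewrite big_ord_recr /= expr0 mul1r -addrA -natrD addnn -mul2n -natrD -mulnDr.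
Qed.

Theorem lemma1 (k : nat) (hk : (0 < k)%N) :
  \sum_(t < (k./2).+1) \sum_(i < (k./2 - t).+1)
     bernoulli (2 * t) * 2%:R ^+ (2 * t)
       * trinomial (2 * k + 2) (2 * t) (2 * i + 1) (2 * k - 2 * t - 2 * i + 1)
  = (k.+1)%:R * (2%:R ^+ (2 * k) + (-1) ^+ k * ('C(2 * k, k))%:R).
Proof.
have le_half : (2 * k./2 <= k)%N by rewrite -{2}(odd_double_half k) mul2n leq_addl.
pose G j t := bernoulli (2 * t) * 2%:R ^+ (2 * t) * 'C(2 * j + 1, 2 * t)%:R
  * 'C(2 * k + 2, 2 * j + 1)%:R.
rewrite (eq_bigr (fun t : 'I_(k./2).+1 => \sum_(i < (k./2 - t).+1) G (t + i)%N t)).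
  rewrite big_triangle.
  rewrite (eq_bigr (fun j : 'I_(k./2).+1 => (2 * k + 2)%:R * 'C((2 * k).+1, 2 * j)%:R)).
    rewrite -mulr_sumr (_ : 2 * k + 2 = k.+1 * 2)%N; last by lia.
    by rewrite natrM -mulrA sum_bin_even_half.
  move=> j _; rewrite /G -mulr_suml sum_even_bernoulli -!natrM.
  by rewrite (_ : 2 * k + 2 = (2 * k).+2)%N ?addn1 ?(mul_bin_diag (2 * k).+2) //; lia.
move=> t _; apply: eq_bigr => i _.
have le_tik : (t + i <= k./2)%N by have := ltn_ord i; have := ltn_ord t; lia.
rewrite /G trinomial_binomial; last by lia.
by rewrite (_ : 2 * t + (2 * i + 1) = 2 * (t + i) + 1)%N 1?[_%:R * _%:R]mulrC ?mulrA //; lia.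
Qed.
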